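(* Let $(G,\omega,\mu)$ be an infinite, connected weighted graph, and let $d$ be a pseudo metric on $G$ which is intrinsic, has finite jump size $s$, and such that every ball $B_r(x)$ ($x\in G$, $r>0$) is a finite set. Let $V:G\to\mathbb{R}$ satisfy $c_0:=\inf_G V>0$. Let $u:G\to\mathbb{R}$ be a solution of $$\Delta u - Vu = 0 \quad\text{in } G.$$ Let $p\ge 2$ and $\beta>0$ be such that $$\beta^2 e^{2s\beta} < 2c_0 p .$$ Fix $x_0\in G$ and suppose $u\in \ell^p_{\varphi_\beta}(G,\mu)$, where $\varphi_\beta(x)=e^{-\beta d(x,x_0)}$. Then $u(x)=0$ for all $x\in G$.
   Context: A weighted graph $(G,\omega,\mu)$: $G$ is a countable set, $\mu:G\to(0,\infty)$, and $\omega:G\times G\to[0,\infty)$ satisfies $\omega(x,x)=0$, $\omega(x,y)=\omega(y,x)$, $\sum_{y}\omega(x,y)<\infty$ for all $x$. Write $x\sim y$ iff $\omega(x,y)>0$; the graph is connected if any two vertices are joined by a finite path $x_0\sim x_1\sim\dots\sim x_n$. The Laplacian is $\Delta f(x)=\frac{1}{\mu(x)}\sum_{y\in G}[f(y)-f(x)]\omega(x,y)$ (well defined here since the graph is locally finite under the assumptions). A pseudo metric $d$ on $G$ is a symmetric function $G\times G\to[0,\infty)$ with $d(x,x)=0$ satisfying the triangle inequality (possibly $d(x,y)=0$ for $x\ne y$). Its jump size is $s:=\sup\{d(x,y): x,y\in G,\ \omega(x,y)>0\}$. For $q\ge1$, $C_0>0$, $d$ is $q$-intrinsic with bound $C_0$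 if $\frac{1}{\mu(x)}\sum_{y}\omega(x,y)d^q(x,y)\le C_0$ for all $x\in G$; $d$ is called intrinsic if it is $2$-intrinsic with bound $1$. Balls: $B_r(x_0)=\{x\in G: d(x,x_0)<r\}$. For $\varphi:G\to(0,\infty)$ and $p\in[1,\infty)$, $\ell^p_\varphi(G,\mu)=\{u:G\to\mathbb{R}:\ \sum_{x\in G}|u(x)|^p\varphi(x)\mu(x)<\infty\}$. *)

From mathcomp Require Import all_boot all_order all_algebra.
From mathcomp Require Import all_classical all_reals all_analysis.
Set Implicit Arguments. Unset Strict Implicit. Unset Printing Implicit Defensive.
Import Order.TTheory GRing.Theory Num.Theory.
Local Open Scope classical_set_scope.
Local Open Scope ring_scope.

Section Defs.
Variables (R : realType) (G : countType).

Definition weighted_graph (w : G -> G -> R) (mu : G -> R) : Prop :=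
  [/\ forall x, 0 < mu x,
      forall x y, 0 <= w x y,
      forall x, w x x = 0,
      forall x y, w x y = w y x &
      forall x, (\esum_(y in [set: G]) (w x y)%:E < +oo)%E].

Definition adj (w : G -> G -> R) : rel G := fun x y => 0 < w x y.

Definition connected_graph (w : G -> G -> R) : Prop :=
  forall x y : G, exists p : seq G, path (adj w) x p /\ last x p = y.

Definition pseudo_metric (d : G -> G -> R) : Prop :=
  [/\ forall x y, 0 <= d x y,
      forall x, d x x = 0,
      forall x y, d x y = d y x &
      forall x y z, d x z <= d x y + d y z].

Definition edge_lengths (w d : G -> G -> R) : set R :=
  [set r | exists x y, 0 < w x y /\ r = d x y].

Definition jump_size (w d : G -> G -> R) : R := sup (edge_lengths w d).

Definition q_intrinsic (w : G -> G -> R) (mu : G -> R) (d : G -> G -> R)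
    (q C0 : R) : Prop :=
  forall x, (((mu x)^-1)%:E * (\esum_(y in [set: G]) (w x y * d x y `^ q)%:E)
             <= C0%:E)%E.

Definition intrinsic w mu d : Prop := q_intrinsic w mu d 2 1.

Definition dball (d : G -> G -> R) (x : G) (r : R) : set G :=
  [set y | d y x < r].

(* Laplacian; the sum is over the (finite, by local finiteness) support *)
Definition laplacian (w : G -> G -> R) (mu : G -> R) (f : G -> R) (x : G) : R :=
  (mu x)^-1 * \sum_(y \in [set: G]) ((f y - f x) * w x y).

Definition in_lp_weighted (mu phi : G -> R) (p : R) (u : G -> R) : Prop :=
  (\esum_(x in [set: G]) (`|u x| `^ p * phi x * mu x)%:E < +oo)%E.

End Defs.

From mathcomp Require Import all_boot all_order all_algebra.
From mathcomp Require Import all_classical all_reals all_analysis.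
From mathcomp Require Import ring lra.

(* Put W := |u|^q with q := p/2 >= 1.  Convexity of t |-> |t|^q turns the
   equation Delta u = V u into the subsolution inequality Delta W >= q c0 W.
   Testing it against zeta^2 W, where zeta := e^(-beta d(., x0) / 2) eta_k and
   eta_k := (1 - d(., x0) / k)_+, and symmetrising (discrete integration by
   parts) bounds q c0 sum mu W^2 zeta^2 by (1/2) sum w(x,y) W(x)^2 (zeta y - zeta x)^2.
   Along an edge |d(y,x0) - d(x,x0)| <= d(x,y) <= s, and the intrinsic bound
   sum_y w(x,y) d(x,y)^2 <= mu x then gives
     q c0 sum mu W^2 phi eta_k^2
       <= beta^2 e^(s beta) / 4 * sum mu W^2 phi eta_k^2 + e^(s beta) / k^2 * |u|^p_{l^p_phi}.
   As beta^2 e^(s beta) / 4 < q c0, the first term is absorbed, and k -> oo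
   leaves W = 0. *)
Set Implicit Arguments. Unset Strict Implicit. Unset Printing Implicit Defensive.
Import Order.TTheory GRing.Theory Num.Theory.
Local Open Scope classical_set_scope.
Local Open Scope ring_scope.

Section RealInequalities.
Variable R : realType.
Implicit Types a b k q r t z : R.

Lemma normr_expRB1_le z : `|expR z - 1| <= `|z| * expR `|z|.
Proof.
have [z0|z0] := leP 0 z.
  have ez1 : 1 <= expR z by rewrite -expR0 ler_expR.
  rewrite !ger0_norm ?subr_ge0 //.
  have h := expR_ge1Dx (- z); rewrite expRN in h.
  have ez := expR_gt0 z.
  have : (1 - z) * expR z <= 1 by rewrite -ler_pdivlMr // div1r.
  lra.
have ez1 : expR z <= 1 by rewrite expR_le1 ltW.
rewrite distrC ger0_norm ?subr_ge0 // ltr0_norm //.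
have h := expR_ge1Dx z.
have h1 : 1 <= expR (- z) by rewrite -expR0 ler_expR oppr_ge0 ltW.
have : - z <= - z * expR (- z) by rewrite ler_peMr // oppr_ge0 ltW.
lra.
Qed.

Lemma sqr_expRB1_le z : (expR z - 1) ^+ 2 <= z ^+ 2 * expR (2 * `|z|).
Proof.
rewrite expRM_natl -(real_normK (num_real (expR z - 1))) -(real_normK (num_real z)).
rewrite -exprMn; apply: lerXn2r; rewrite ?nnegrE ?mulr_ge0 ?expR_ge0 //.
exact: normr_expRB1_le.
Qed.

Lemma sqr_expR_halfB_le (beta s t a b : R) : 0 < beta ->
  `|b - a| <= t -> t <= s ->
  (expR (- (beta / 2) * b) - expR (- (beta / 2) * a)) ^+ 2 <=
  beta ^+ 2 * expR (s * beta) / 4 * t ^+ 2 * expR (- beta * a).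
Proof.
move=> beta0 bat ts; set z := - (beta / 2) * (b - a).
have -> : expR (- (beta / 2) * b) - expR (- (beta / 2) * a) =
          expR (- (beta / 2) * a) * (expR z - 1).
  by rewrite mulrBr mulr1 -expRD /z; congr (expR _ - _); ring.
rewrite exprMn -expRM_natl (_ : 2%:R * _ = - beta * a); last by field.
rewrite mulrC ler_wpM2r ?expR_ge0 //; apply: le_trans (sqr_expRB1_le z) _.
have t0 : 0 <= t by apply: le_trans bat.
have z2 : z ^+ 2 <= beta ^+ 2 / 4 * t ^+ 2.
  rewrite /z exprMn sqrrN expr_div_n (_ : 2 ^+ 2 = 4 :> R); last by rewrite expr2; lra.
  rewrite ler_wpM2l ?divr_ge0 ?sqr_ge0 // -(real_normK (num_real (b - a))).
  by apply: lerXn2r; rewrite ?nnegrE.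
have ez : expR (2 * `|z|) <= expR (s * beta).
  have beta2 : 0 <= beta / 2 by rewrite divr_ge0 ?ltW.
  rewrite ler_expR /z normrM normrN (ger0_norm beta2) mulrA.
  rewrite (_ : 2 * (beta / 2) = beta); last by field.
  by rewrite mulrC; apply: ler_wpM2r; [exact: ltW | exact: le_trans bat ts].
rewrite (_ : _ * _ / 4 * _ = (beta ^+ 2 / 4 * t ^+ 2) * expR (s * beta)); last by ring.
by apply: ler_pM; rewrite ?sqr_ge0 ?expR_ge0.
Qed.

Lemma expR_shift_le (beta s a b : R) : 0 < beta -> `|b - a| <= s ->
  expR (- beta * b) <= expR (s * beta) * expR (- beta * a).
Proof. by move=> beta0; rewrite -expRD ler_expR ler_norml => /andP[h1 h2]; nra. Qed.

Lemma normr_max0B_le a b : `|Num.max a 0 - Num.max b 0| <= `|a - b|.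
Proof.
case: (leP a 0) => a0; case: (leP b 0) => b0.
- by rewrite subrr normr0.
- by rewrite sub0r normrN gtr0_norm // ler0_norm; lra.
- by rewrite subr0 !gtr0_norm //; lra.
- by [].
Qed.

Lemma powR_tangent_le a b q : 0 < a -> 0 <= b -> 1 <= q ->
  q * a `^ (q - 1) * (b - a) <= b `^ q - a `^ q.
Proof.
move=> a0 b0 q1.
have [->|qn1] := eqVneq q 1.
  by rewrite subrr powRr0 !mul1r !powRr1 // ltW.
have q1' : 1 < q by rewrite lt_neqAle eq_sym qn1.
have qm0 : 0 < q - 1 by rewrite subr_gt0.
have q0 : 0 < q by lra.
pose q' := q / (q - 1).
have q'0 : 0 < q' by rewrite divr_gt0.
have conj : q^-1 + q'^-1 = 1 by rewrite /q' invf_div; field; rewrite gt_eqF.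
have := conjugate_powR (powR_ge0 a (q - 1)) b0 q'0 q0; rewrite addrC conj.
rewrite -powRrM (_ : (q - 1) * q' = q); last by rewrite /q'; field; rewrite gt_eqF.
move=> /(_ erefl) young.
have aq : a * a `^ (q - 1) = a `^ q by rewrite mulr_powRB1 // ltW.
have : q * (a `^ (q - 1) * b) <= (q - 1) * a `^ q + b `^ q.
  rewrite (_ : _ + _ = q * (a `^ q / q' + b `^ q / q)); first by rewrite ler_pM2l.
  by rewrite /q'; field; rewrite (lt0r_neq0 q0) (lt0r_neq0 qm0).
have -> : q * a `^ (q - 1) * (b - a) = q * (a `^ (q - 1) * b) - q * a `^ q.
  by rewrite -aq; ring.
lra.
Qed.

Lemma norm_powR_tangent_le a b q : a != 0 -> 1 <= q ->
  q * `|a| `^ q / a * (b - a) <= `|b| `^ q - `|a| `^ q.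
Proof.
move=> a0 q1; have na0 : 0 < `|a| by rewrite normr_gt0.
have -> : q * `|a| `^ q / a * (b - a) = q * `|a| `^ (q - 1) * (`|a| / a * b - `|a|).
  by rewrite -(mulr_powRB1 (ltW na0)) ?(lt_le_trans ltr01 q1) //; field.
apply: le_trans (powR_tangent_le na0 (normr_ge0 b) q1).
rewrite ler_wpM2l ?mulr_ge0 ?powR_ge0 ?(le_trans ler01) // lerD2r.
apply: le_trans (ler_norm _) _.
by rewrite !normrM normfV normr_id mulfV ?mul1r // lt0r_neq0.
Qed.

Lemma pair_cross_le (a b za zb : R) :
  za ^+ 2 * a * (b - a) + zb ^+ 2 * b * (a - b) <=
  (a ^+ 2 + b ^+ 2) / 2 * (zb - za) ^+ 2.
Proof.
rewrite -subr_ge0.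
have -> : (a ^+ 2 + b ^+ 2) / 2 * (zb - za) ^+ 2 -
          (za ^+ 2 * a * (b - a) + zb ^+ 2 * b * (a - b)) =
          ((a - b) * (zb - za)) ^+ 2 / 2 + (b * zb - a * za) ^+ 2 by field.
by rewrite addr_ge0 ?divr_ge0 ?sqr_ge0.
Qed.

Definition cutoff (k r : R) : R := Num.max (1 - r / k) 0.

Lemma cutoff_ge0 k r : 0 <= cutoff k r.
Proof. by rewrite /cutoff le_max lexx orbT. Qed.

Lemma cutoff_neq0 k r : 0 < k -> cutoff k r != 0 -> r < k.
Proof.
move=> k0; rewrite /cutoff; case: (leP (1 - r / k) 0) => [|h _]; first by rewrite eqxx.
by move: h; rewrite subr_gt0 ltr_pdivrMr // mul1r.
Qed.

Lemma cutoff_ge_half k r : 0 < k -> r <= k / 2 -> 2^-1 <= cutoff k r.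
Proof.
move=> k0 rk; rewrite /cutoff le_max; apply/orP; left.
have : r / k <= 2^-1 by rewrite ler_pdivrMr // mulrC.
lra.
Qed.

Lemma sqr_cutoffB_le k t a b : 0 < k -> `|b - a| <= t ->
  (cutoff k b - cutoff k a) ^+ 2 <= t ^+ 2 / k ^+ 2.
Proof.
move=> k0 bat; have t0 : 0 <= t by apply: le_trans bat.
rewrite -expr_div_n -(real_normK (num_real (cutoff k b - cutoff k a))).
have k0' := ltW k0.
apply: lerXn2r; rewrite ?nnegrE ?divr_ge0 //.
apply: le_trans (normr_max0B_le _ _) _.
rewrite (_ : 1 - b / k - (1 - a / k) = (a - b) / k); last by field; rewrite lt0r_neq0.
by rewrite normrM normfV (gtr0_norm k0) distrC ler_wpM2r // invr_ge0.
Qed.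

Lemma sqr_test_functionB_le (beta s k t a b : R) : 0 < beta -> 0 < k ->
  `|b - a| <= t -> t <= s ->
  (expR (- (beta / 2) * b) * cutoff k b - expR (- (beta / 2) * a) * cutoff k a) ^+ 2
  <= 2 * t ^+ 2 * expR (- beta * a) *
     (beta ^+ 2 * expR (s * beta) / 4 * cutoff k a ^+ 2 + expR (s * beta) / k ^+ 2).
Proof.
move=> beta0 k0 bat ts.
have shift := expR_shift_le beta0 (le_trans bat ts).
have dexp := sqr_expR_halfB_le beta0 bat ts.
have dcut := sqr_cutoffB_le k0 bat.
have sqr_half r : expR (- (beta / 2) * r) ^+ 2 = expR (- beta * r).
  by rewrite -expRM_natl; congr expR; field.
set eb := expR (- (beta / 2) * b) in dexp *.
set ea := expR (- (beta / 2) * a) in dexp *.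
set cb := cutoff k b in dcut *; set ca := cutoff k a in dcut *.
set E := expR (s * beta) in shift dexp *.
have -> : eb * cb - ea * ca = eb * (cb - ca) + ca * (eb - ea) by ring.
have sqrD (x y : R) : (x + y) ^+ 2 <= 2 * x ^+ 2 + 2 * y ^+ 2.
  by have := sqr_ge0 (x - y); lra.
apply: le_trans (sqrD _ _) _.
have h1 : (eb * (cb - ca)) ^+ 2 <= E * expR (- beta * a) * (t ^+ 2 / k ^+ 2).
  by rewrite exprMn sqr_half; apply: ler_pM; rewrite ?expR_ge0 ?sqr_ge0.
have h2 : (ca * (eb - ea)) ^+ 2 <=
          ca ^+ 2 * (beta ^+ 2 * E / 4 * t ^+ 2 * expR (- beta * a)).
  by rewrite exprMn ler_wpM2l ?sqr_ge0.
have -> : 2 * t ^+ 2 * expR (- beta * a) * (beta ^+ 2 * E / 4 * ca ^+ 2 + E / k ^+ 2) =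
  2 * (E * expR (- beta * a) * (t ^+ 2 / k ^+ 2)) +
  2 * (ca ^+ 2 * (beta ^+ 2 * E / 4 * t ^+ 2 * expR (- beta * a))).
  by field; rewrite lt0r_neq0.
lra.
Qed.

Lemma le0_quadratic_bound (A B m : R) :
  (forall k, m <= k -> A * k ^+ 2 <= B) -> A <= 0.
Proof.
move=> bound; rewrite leNgt; apply/negP => A0.
pose k := `|m| + 1 + `|B| / A.
have hB : 0 <= `|B| / A by rewrite divr_ge0 // ltW.
have k1 : 1 <= k by rewrite /k; have := normr_ge0 m; lra.
have mk : m <= k by apply: le_trans (ler_norm m) _; rewrite /k; lra.
have := bound k mk.
have : A * k <= A * k ^+ 2 by rewrite ler_pM2l // expr2 ler_peMr //; lra.
have : A * k = A * (`|m| + 1) + `|B| by rewrite /k; field; rewrite lt0r_neq0.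
have := ler_norm B; have := mulr_ge0 (ltW A0) (normr_ge0 m); lra.
Qed.

End RealInequalities.

Section SymmetricSums.
Variables (R : realType) (T : eqType) (a : T -> T -> R).
Hypothesis a_ge0 : forall x y, 0 <= a x y.
Hypothesis a_sym : forall x y, a x y = a y x.

(* Discrete Caccioppoli inequality: only the gradient of the test function z survives. *)
Lemma sum_cross_le (S : seq T) (W z : T -> R) :
  \sum_(x <- S) \sum_(y <- S) a x y * z x ^+ 2 * W x * (W y - W x) <=
  2^-1 * \sum_(x <- S) \sum_(y <- S) a x y * W x ^+ 2 * (z y - z x) ^+ 2.
Proof.
pose F x y := a x y * z x ^+ 2 * W x * (W y - W x).
pose H x y := a x y * W x ^+ 2 * (z y - z x) ^+ 2.
have sym_sum (K : T -> T -> R) :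
    \sum_(x <- S) \sum_(y <- S) K x y =
    2^-1 * \sum_(x <- S) \sum_(y <- S) (K x y + K y x).
  have -> : \sum_(x <- S) \sum_(y <- S) (K x y + K y x) =
            \sum_(x <- S) \sum_(y <- S) K x y + \sum_(x <- S) \sum_(y <- S) K y x.
    by rewrite -big_split; apply: eq_bigr => x _; rewrite big_split.
  by rewrite [X in _ + X]exchange_big /=; field.
rewrite -/(F _ _) -/(H _ _) (sym_sum F) (sym_sum H) ler_wpM2l ?invr_ge0 //.
rewrite mulr_sumr; apply: ler_sum => x _; rewrite mulr_sumr; apply: ler_sum => y _.
rewrite /F /H (a_sym y x).
have -> : a x y * z x ^+ 2 * W x * (W y - W x) + a x y * z y ^+ 2 * W y * (W x - W y) =
          a x y * (z x ^+ 2 * W x * (W y - W x) + z y ^+ 2 * W y * (W x - W y)) by ring.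
apply: le_trans (ler_wpM2l (a_ge0 x y) (pair_cross_le (W x) (W y) (z x) (z y))) _.
rewrite (_ : (z x - z y) ^+ 2 = (z y - z x) ^+ 2); last by ring.
by rewrite le_eqVlt; apply/orP; left; apply/eqP; field.
Qed.

End SymmetricSums.

Section FiniteSumsBelowEsum.
Variables (R : realType) (T : choiceType) (g : T -> R).

Lemma sum_le_esum (S : seq T) : uniq S ->
  ((\sum_(x <- S) g x)%:E <= \esum_(x in [set: T]) (g x)%:E)%E.
Proof.
move=> uS; apply: esum_ge; exists [set` S]; first by split => //; exact: finite_seq.
by rewrite fsumEFin ?finite_seq // -fsbig_seq.
Qed.

Lemma sum_le_fine_esum (S : seq T) : (forall x, 0 <= g x) -> uniq S ->
  (\esum_(x in [set: T]) (g x)%:E < +oo)%E ->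
  \sum_(x <- S) g x <= fine (\esum_(x in [set: T]) (g x)%:E).
Proof.
move=> g_ge0 uS fin; rewrite -lee_fin fineK ?sum_le_esum // ge0_fin_numE //.
by apply: esum_ge0 => x _; rewrite lee_fin.
Qed.

End FiniteSumsBelowEsum.

Section Graph.
Variables (R : realType) (G : countType) (w : G -> G -> R) (mu : G -> R)
  (d : G -> G -> R).
Hypothesis Hw : weighted_graph w mu.
Hypothesis Hd : pseudo_metric d.
Hypothesis Hint : intrinsic w mu d.
Hypothesis Hub : has_ubound (edge_lengths w d).
Hypothesis Hfin : forall x (r : R), 0 < r -> finite_set (dball d x r).

Let s := jump_size w d.

Lemma mu_gt0 x : 0 < mu x. Proof. by case: Hw. Qed.
Lemma w_ge0 x y : 0 <= w x y. Proof. by case: Hw. Qed.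
Lemma w_sym x y : w x y = w y x. Proof. by case: Hw. Qed.
Lemma d_ge0 x y : 0 <= d x y. Proof. by case: Hd. Qed.
Lemma d_sym x y : d x y = d y x. Proof. by case: Hd. Qed.
Lemma d_triangle x y z : d x z <= d x y + d y z. Proof. by case: Hd. Qed.

Lemma normr_dB_le x y z : `|d y z - d x z| <= d x y.
Proof.
have := d_triangle y x z; have := d_triangle x y z; rewrite (d_sym y x) ler_norml.
by move=> h1 h2; apply/andP; split; lra.
Qed.

Lemma edge_le_jump_size x y : 0 < w x y -> d x y <= s.
Proof. by move=> wxy; apply: ub_le_sup => //; exists x, y. Qed.

Lemma jump_size_ge0 : 0 <= s.
Proof.
have [[x [y wxy]]|no_edge] := pselect (exists x y, 0 < w x y).
  exact: le_trans (d_ge0 x y) (edge_le_jump_size wxy).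
rewrite /s /jump_size (_ : edge_lengths w d = set0) ?sup0 //.
by apply/seteqP; split => // r [x [y [wxy _]]]; apply: no_edge; exists x, y.
Qed.

(* [laplacian] is a finitely supported sum, junk ([0]) on an infinite support;
   a finite sequence covering the neighbours of [x] computes it. *)
Lemma mulr_laplacian (f : G -> R) x (S : seq G) : uniq S ->
  (forall y, 0 < w x y -> y \in S) ->
  mu x * laplacian w mu f x = \sum_(y <- S) (f y - f x) * w x y.
Proof.
move=> uS nbS; rewrite /laplacian mulrA mulfV ?lt0r_neq0 ?mu_gt0 // mul1r.
rewrite fsbig_supp; apply: fsbig_fwiden => //.
  move=> y [_ /= fy]; apply: nbS; rewrite lt_neqAle w_ge0 andbT eq_sym.
  by apply: contra_notN fy => /eqP ->; rewrite mulr0.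
by move=> y [_ /= fy]; apply/eqP/negPn/negP => h; apply: fy; split => //; apply/eqP.
Qed.

Lemma sum_edge_sqr_le_mu x (S : seq G) : uniq S ->
  \sum_(y <- S) w x y * d x y ^+ 2 <= mu x.
Proof.
move=> uS; have := Hint x; rewrite /intrinsic /q_intrinsic.
have -> : \esum_(y in [set: G]) (w x y * d x y `^ 2)%:E =
          \esum_(y in [set: G]) (w x y * d x y ^+ 2)%:E.
  by apply: eq_esum => y _; rewrite powR_mulrn ?d_ge0.
have := sum_le_esum (fun y => w x y * d x y ^+ 2) uS.
move=> /(lee_wpmul2l _)/le_trans h/h{h}; have mux := mu_gt0 x.
rewrite lee_fin invr_ge0 ltW // -EFinM lee_fin => /(_ erefl).
by rewrite ler_pdivrMl // mulr1.
Qed.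

Definition ball_seq x (r : R) : seq G := finmap.enum_fset (fset_set (dball d x r)).

Lemma ball_seq_uniq x r : uniq (ball_seq x r).
Proof. exact: finmap.fset_uniq. Qed.

Lemma mem_ball_seq x (r : R) y : d y x < r -> y \in ball_seq x r.
Proof.
move=> yx; have r0 : 0 < r by apply: le_lt_trans (d_ge0 y x) yx.
by rewrite /ball_seq in_fset_set; [rewrite inE | exact: Hfin].
Qed.

Lemma edge_mem_ball_seq x y (r : R) : 0 < w x y -> s < r -> y \in ball_seq x r.
Proof.
move=> wxy sr; have dxy := edge_le_jump_size wxy.
by apply: mem_ball_seq; rewrite d_sym (le_lt_trans dxy).
Qed.

Lemma laplacian_norm_powR_ge (f : G -> R) q x : 1 <= q -> f x != 0 ->
  q * `|f x| `^ q / f x * laplacian w mu f x <=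
  laplacian w mu (fun y => `|f y| `^ q) x.
Proof.
move=> q1 fx0; set S := ball_seq x (s + 1).
have nbS y : 0 < w x y -> y \in S by move=> wxy; apply: edge_mem_ball_seq; lra.
have mux := mu_gt0 x.
rewrite -(ler_pM2l mux) mulrCA !(mulr_laplacian _ (ball_seq_uniq _ _) nbS) mulr_sumr.
apply: ler_sum => y _; rewrite mulrA ler_wpM2r ?w_ge0 //.
exact: norm_powR_tangent_le.
Qed.

Lemma laplacian_ge0_at_zero (f : G -> R) x : (forall y, 0 <= f y) -> f x = 0 ->
  0 <= laplacian w mu f x.
Proof.
move=> f0 fx0; set S := ball_seq x (s + 1).
have nbS y : 0 < w x y -> y \in S by move=> wxy; apply: edge_mem_ball_seq; lra.
rewrite -(pmulr_rge0 _ (mu_gt0 x)) (mulr_laplacian _ (ball_seq_uniq _ _) nbS).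
by apply: sumr_ge0 => y _; rewrite fx0 subr0 mulr_ge0 ?w_ge0.
Qed.

Lemma norm_powR_subsolution (u V : G -> R) c q :
  (forall x, laplacian w mu u x = V x * u x) -> (forall x, c <= V x) -> 1 <= q ->
  forall x, q * c * `|u x| `^ q <= laplacian w mu (fun y => `|u y| `^ q) x.
Proof.
move=> Hu cV q1 x; have q0 : 0 < q by apply: lt_le_trans q1.
have [ux0|ux0] := eqVneq (u x) 0.
  rewrite ux0 normr0 powR0 ?lt0r_neq0 // mulr0.
  by apply: laplacian_ge0_at_zero => [y|]; rewrite ?powR_ge0 ?ux0 ?normr0 ?powR0 ?lt0r_neq0.
apply: le_trans (laplacian_norm_powR_ge q1 ux0); rewrite Hu.
rewrite (_ : _ * (V x * u x) = q * `|u x| `^ q * V x); last by field.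
by rewrite mulrAC ler_wpM2l // mulr_ge0 ?powR_ge0 ?ltW.
Qed.

Section CutoffEnergy.
Variables (beta c : R) (x0 : G) (W : G -> R).
Hypothesis beta_gt0 : 0 < beta.
Hypothesis W_ge0 : forall x, 0 <= W x.
Hypothesis W_sub : forall x, c * W x <= laplacian w mu W x.

Let phi x := expR (- beta * d x x0).
Let E := expR (s * beta).
Let kappa := beta ^+ 2 * E / 4.
Let eta (k : R) x := cutoff k (d x x0).
Let zeta (k : R) x := expR (- (beta / 2) * d x x0) * eta k x.

Lemma sum_test_gradient_le (k : R) x (S : seq G) : 0 < k -> uniq S ->
  \sum_(y <- S) w x y * (zeta k y - zeta k x) ^+ 2 <=
  2 * phi x * (kappa * eta k x ^+ 2 + E / k ^+ 2) * mu x.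
Proof.
move=> k0 uS; set C := 2 * phi x * _.
have C0 : 0 <= C.
  have E0 : 0 <= E by exact: expR_ge0.
  have kappa0 : 0 <= kappa by rewrite /kappa divr_ge0 // mulr_ge0 ?sqr_ge0.
  apply: mulr_ge0; first by rewrite mulr_ge0 ?expR_ge0.
  by rewrite addr_ge0 ?(mulr_ge0 kappa0) ?(divr_ge0 E0) ?sqr_ge0.
apply: le_trans (ler_wpM2l C0 (sum_edge_sqr_le_mu x uS)); rewrite mulr_sumr.
apply: ler_sum => y _; have [wxy0|wxy] := eqVneq (w x y) 0; first by rewrite wxy0 !mul0r mulr0.
have wxy_gt0 : 0 < w x y by rewrite lt_neqAle eq_sym wxy w_ge0.
rewrite [X in _ <= X]mulrCA; apply: ler_wpM2l; first exact: w_ge0.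
rewrite (_ : C * _ = 2 * d x y ^+ 2 * phi x * (kappa * eta k x ^+ 2 + E / k ^+ 2)).
  exact: sqr_test_functionB_le (normr_dB_le x y x0) (edge_le_jump_size wxy_gt0).
by rewrite /C; ring.
Qed.

Lemma cutoff_energy_le (k : R) (S : seq G) : 0 < k -> uniq S ->
  (forall x y, eta k x != 0 -> 0 < w x y -> y \in S) ->
  c * \sum_(x <- S) mu x * W x ^+ 2 * phi x * eta k x ^+ 2 <=
  kappa * \sum_(x <- S) mu x * W x ^+ 2 * phi x * eta k x ^+ 2 +
  E / k ^+ 2 * \sum_(x <- S) mu x * W x ^+ 2 * phi x.
Proof.
move=> k0 uS nbS.
have zeta_sqr x : zeta k x ^+ 2 = phi x * eta k x ^+ 2.
  by rewrite /zeta exprMn -expRM_natl; congr (expR _ * _); rewrite /phi; field.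
have tested : c * \sum_(x <- S) mu x * W x ^+ 2 * phi x * eta k x ^+ 2 <=
    \sum_(x <- S) \sum_(y <- S) w x y * zeta k x ^+ 2 * W x * (W y - W x).
  rewrite mulr_sumr; apply: ler_sum => x _.
  have [eta0|eta0] := eqVneq (eta k x) 0.
    have zeta0 : zeta k x = 0 by rewrite /zeta eta0 mulr0.
    by rewrite eta0 zeta0 expr0n /= !mulr0 big1 // => y _; rewrite !(mulr0, mul0r).
  rewrite (_ : \sum_(y <- S) _ = zeta k x ^+ 2 * W x * (mu x * laplacian w mu W x)).
    rewrite (_ : _ * _ = zeta k x ^+ 2 * W x * (mu x * (c * W x))); last first.
      by rewrite zeta_sqr; ring.
    apply: ler_wpM2l; first by rewrite mulr_ge0 ?sqr_ge0.
    by apply: ler_wpM2l; [exact: ltW (mu_gt0 x) | exact: W_sub].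
  rewrite (mulr_laplacian _ uS (nbS x ^~ eta0)) mulr_sumr.
  by apply: eq_bigr => y _; ring.
apply: le_trans tested _; apply: le_trans (sum_cross_le w_ge0 w_sym _ _ _) _.
apply: le_trans (_ : 2^-1 * \sum_(x <- S) W x ^+ 2 *
    (2 * phi x * (kappa * eta k x ^+ 2 + E / k ^+ 2) * mu x) <= _).
  rewrite ler_wpM2l ?invr_ge0 //; apply: ler_sum => x _.
  under eq_bigr do rewrite -mulrA [W x ^+ 2 * _]mulrC mulrA.
  rewrite -mulr_suml mulrC; apply: ler_wpM2l; first exact: sqr_ge0.
  exact: sum_test_gradient_le.
rewrite !mulr_sumr -big_split le_eqVlt; apply/orP; left; apply/eqP.
by apply: eq_bigr => x _ /=; field; rewrite lt0r_neq0.
Qed.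

Hypothesis kappa_lt_c : kappa < c.
Hypothesis W_l2 : (\esum_(x in [set: G]) (W x ^+ 2 * phi x * mu x)%:E < +oo)%E.

Let M := fine (\esum_(x in [set: G]) (W x ^+ 2 * phi x * mu x)%:E).

Lemma cutoff_energy_lower x1 (k : R) : 1 <= k -> 2 * d x1 x0 <= k ->
  (c - kappa) * (mu x1 * W x1 ^+ 2 * phi x1) / 4 * k ^+ 2 <= E * M.
Proof.
move=> k1 x1k; have k0 : 0 < k by lra.
have s0 := jump_size_ge0.
set S := ball_seq x0 (k + s + 1).
have nbS x y : eta k x != 0 -> 0 < w x y -> y \in S.
  move=> /(cutoff_neq0 k0) xk wxy; apply: mem_ball_seq.
  have := d_triangle y x x0; have := edge_le_jump_size wxy; rewrite d_sym; lra.
have x1S : x1 \in S by apply: mem_ball_seq; have := d_ge0 x1 x0; lra.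
have term_ge0 x : 0 <= mu x * W x ^+ 2 * phi x.
  by rewrite !mulr_ge0 ?sqr_ge0 ?expR_ge0 ?(ltW (mu_gt0 x)).
have x1_term : mu x1 * W x1 ^+ 2 * phi x1 / 4 <=
    \sum_(x <- S) mu x * W x ^+ 2 * phi x * eta k x ^+ 2.
  rewrite (bigD1_seq x1) ?ball_seq_uniq //= -[X in X <= _]addr0.
  apply: lerD; last by apply: sumr_ge0 => x _; rewrite mulr_ge0 ?sqr_ge0.
  have eta_half : 2^-1 <= eta k x1 by apply: cutoff_ge_half; lra.
  have : 4^-1 <= eta k x1 ^+ 2.
    rewrite (_ : 4^-1 = 2^-1 ^+ 2); last by rewrite expr2; field.
    by apply: lerXn2r; rewrite ?nnegrE ?invr_ge0 ?cutoff_ge0.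
  by move=> h; apply: ler_wpM2l.
have sum_le_M : \sum_(x <- S) mu x * W x ^+ 2 * phi x <= M.
  rewrite (eq_bigr (fun x => W x ^+ 2 * phi x * mu x)) => [|x _]; last by ring.
  by apply: sum_le_fine_esum; rewrite ?ball_seq_uniq // => x; rewrite mulrC mulrA.
have energy := @cutoff_energy_le k S k0 (ball_seq_uniq _ _) nbS.
have E0 : 0 <= E / k ^+ 2 by rewrite divr_ge0 ?expR_ge0 ?sqr_ge0.
have kk : 0 < (k ^+ 2)^-1 by rewrite invr_gt0 exprn_gt0.
rewrite -(ler_pM2r kk) mulfK ?sqrf_eq0 ?lt0r_neq0 //.
have := ler_wpM2l E0 sum_le_M.
have : (c - kappa) * (mu x1 * W x1 ^+ 2 * phi x1 / 4) <=
       (c - kappa) * \sum_(x <- S) mu x * W x ^+ 2 * phi x * eta k x ^+ 2.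
  by apply: ler_wpM2l; [rewrite subr_ge0 ltW | exact: x1_term].
lra.
Qed.

Lemma subsolution_l2_eq0 x : W x = 0.
Proof.
have lower k : 1 + 2 * d x x0 <= k ->
    (c - kappa) * (mu x * W x ^+ 2 * phi x) / 4 * k ^+ 2 <= E * M.
  by move=> k1; apply: cutoff_energy_lower; have := d_ge0 x x0; lra.
have := le0_quadratic_bound lower.
rewrite pmulr_lle0 ?invr_gt0 // pmulr_rle0 ?subr_gt0 //.
rewrite pmulr_lle0 ?expR_gt0 // pmulr_rle0 ?mu_gt0 //.
by move=> h; apply/eqP; rewrite -sqrf_eq0 eq_le h sqr_ge0.
Qed.

End CutoffEnergy.

End Graph.

(* [inf] of a set that is not bounded below is [0] by convention. *)
Lemma inf_range_le (T : Type) (R : realType) (f : T -> R) x :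
  inf (range f) != 0 -> inf (range f) <= f x.
Proof.
move=> inf0; have [[_ lb]|/inf_out inf_eq0] := pselect (has_inf (range f)).
  by apply: (ge_inf lb); exists x.
by rewrite inf_eq0 eqxx in inf0.
Qed.

Theorem theorem3p1 (R : realType) (G : countType)
  (w : G -> G -> R) (mu : G -> R) (d : G -> G -> R) (V u : G -> R)
  (p beta : R) (x0 : G) :
  weighted_graph w mu ->
  infinite_set [set: G] ->
  connected_graph w ->
  pseudo_metric d ->
  intrinsic w mu d ->
  has_ubound (edge_lengths w d) ->
  (forall (x : G) (r : R), 0 < r -> finite_set (dball d x r)) ->
  0 < inf (range V) ->
  (forall x, laplacian w mu u x - V x * u x = 0) ->
  2 <= p -> 0 < beta ->
  beta ^+ 2 * expR (2 * jump_size w d * beta) < 2 * inf (range V) * p ->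
  in_lp_weighted mu (fun x => expR (- beta * d x x0)) p u ->
  forall x, u x = 0.
Proof.
move=> Hw _ _ Hd Hint Hub Hfin c0_gt0 Hu p2 beta0 Hbeta Hl x.
set c0 := inf (range V) in c0_gt0 Hbeta.
set q := p / 2; have q1 : 1 <= q by rewrite /q ler_pdivlMr // mul1r.
pose W y := `|u y| `^ q.
have W_sub : forall y, q * c0 * W y <= laplacian w mu W y.
  apply: (norm_powR_subsolution (V := V) (c := c0) Hw Hd Hub Hfin _ _ q1) => [y|y].
    by apply/eqP; rewrite -subr_eq0 Hu.
  by apply: inf_range_le; rewrite lt0r_neq0.
have W_l2 : (\esum_(y in [set: G]) (W y ^+ 2 * expR (- beta * d y x0) * mu y)%:E < +oo)%E.
  rewrite (eq_esum (b := fun y => (`|u y| `^ p * expR (- beta * d y x0) * mu y)%:E)) //.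
  move=> y _; rewrite /W -powR_mulrn ?powR_ge0 // -powRrM /q.
  by congr ((_ `^ _) * _ * _)%:E; field.
have kappa_lt : beta ^+ 2 * expR (jump_size w d * beta) / 4 < q * c0.
  have s0 := jump_size_ge0 Hd Hub.
  have : expR (jump_size w d * beta) <= expR (2 * jump_size w d * beta).
    by rewrite ler_expR ler_wpM2r ?(ltW beta0) // ler_peMl //; lra.
  move/(ler_wpM2l (sqr_ge0 beta)); rewrite /q; lra.
have := subsolution_l2_eq0 Hw Hd Hint Hub Hfin beta0 (fun y => powR_ge0 _ _) W_sub kappa_lt W_l2 x.
by move/powR_eq0_eq0/eqP; rewrite normr_eq0 => /eqP.
Qed.
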